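(* Let $G$ be a Lie group, let $\mathcal{X}$ and $\mathcal{Y}$ be linear vector fields on $G$ with flows $(\varphi_t)_{t\in\mathbb{R}}$ and $(\psi_t)_{t\in\mathbb{R}}$, and suppose $\mathcal{X}$ and $\mathcal{Y}$ are $\pi$-conjugated, i.e. there is an automorphism $\pi:G\to G$ with $\pi(\varphi_t(x))=\psi_t(\pi(x))$ and $\varphi_t(\pi^{-1}(x))=\pi^{-1}(\psi_t(x))$ for all $t\in\mathbb{R}$, $x\in G$. Let $h:G\to G$ be a (continuous) homomorphism, $K=\ker(h)$ and $S=\ker(h\circ\pi^{-1})$. Then the pair $(\mathcal{X},\pi_K)$ is observable if and only if the pair $(\mathcal{Y},\pi_S)$ is observable.
   Context: A vector field on a Lie group $G$ is linear if its flow $(\varphi_t)_{t\in\mathbb{R}}$ is a one-parameter subgroup of $\mathrm{Aut}(G)$. For a closed subgroup $K$ of $G$, $\pi_K:G\to G/K$ denotes the canonical projection, and a pair $(\mathcal{X},\pi_K)$ consists of a linear vector field $\mathcal{X}$ (flow $\varphi_t$) and this projection. The pair is observable at $x_1\in G$ if for every $x_2\in G\setminus\{x_1\}$ there is $t\ge0$ with $\pi_K(\varphi_t(x_1))\neq\pi_K(\varphi_t(x_2))$; it is observable if it is observable at every $x_1\in G$. *)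

From HB Require Import structures.
From mathcomp Require Import all_boot all_order all_algebra.
From mathcomp Require Import all_classical all_reals all_analysis.
Set Implicit Arguments. Unset Strict Implicit. Unset Printing Implicit Defensive.
Import Order.TTheory GRing.Theory Num.Theory numFieldNormedType.Exports.
Local Open Scope ring_scope.

(* A topological group structure on the carrier of a topological space G
   (stand-in for a Lie group: no smooth structure is available). *)
Record topgroup (G : topologicalType) := TopGroup {
  gmul : G -> G -> G;
  ginv : G -> G;
  gone : G;
  gmulA : forall x y z, gmul x (gmul y z) = gmul (gmul x y) z;
  gmul1 : forall x, gmul gone x = x;
  gmulV : forall x, gmul (ginv x) x = gone;
  gmul_cont : continuous (fun p : G * G => gmul p.1 p.2);
  ginv_cont : continuous ginv
}.

Definition is_hom (G : topologicalType) (g : topgroup G) (f : G -> G) : Prop :=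
  continuous f /\ forall x y, f (gmul g x y) = gmul g (f x) (f y).

Definition is_aut (G : topologicalType) (g : topgroup G) (f : G -> G) : Prop :=
  is_hom g f /\ exists f', is_hom g f' /\ cancel f f' /\ cancel f' f.

(* flow of a linear vector field: a (continuous) one-parameter subgroup of
   Aut(G), t |-> phi t *)
Definition linear_flow (R : realType) (G : topologicalType) (g : topgroup G)
  (phi : R -> G -> G) : Prop :=
  [/\ forall t, is_aut g (phi t),
      phi 0 = id,
      forall s t, phi (s + t) = phi s \o phi t
    & continuous (fun p : R * G => phi p.1 p.2)].

Definition ker (G : topologicalType) (g : topgroup G) (h : G -> G) : set G :=
  [set x | h x = gone g].

(* pi_K x = pi_K y  in G/K  (left cosets xK) *)
Definition same_coset (G : topologicalType) (g : topgroup G) (K : set G)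
  (x y : G) : Prop := K (gmul g (ginv g x) y).

Definition observable_at (R : realType) (G : topologicalType) (g : topgroup G)
  (phi : R -> G -> G) (K : set G) (x1 : G) : Prop :=
  forall x2, x2 <> x1 -> exists t : R, 0 <= t /\ ~ same_coset g K (phi t x1) (phi t x2).

Definition observable (R : realType) (G : topologicalType) (g : topgroup G)
  (phi : R -> G -> G) (K : set G) : Prop :=
  forall x1, observable_at g phi K x1.

From HB Require Import structures.
From mathcomp Require Import all_boot all_order all_algebra.
From mathcomp Require Import all_classical all_reals all_analysis.
Import Order.TTheory GRing.Theory Num.Theory numFieldNormedType.Exports.
Local Open Scope ring_scope.

(* Observability is a statement about pairs of points, their trajectories and
   the coset relation.  A bijection [pi] carrying the trajectories of [phi] to
   those of [psi] and the coset relation of [K] to that of [S] therefore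
   transports observability at [x] to observability at [pi x].  For an
   automorphism [pi] one has [x^-1 y \in K] iff [(pi x)^-1 (pi y) \in pi K], and
   [pi K = ker (h \o pi^-1)] when [K = ker h]. *)

Section GroupLemmas.
Context {G : topologicalType} (g : topgroup G).
Local Notation "x * y" := (gmul g x y).
Local Notation "x ^-1" := (ginv g x).
Local Notation "1" := (gone g).

Lemma gmulI a : injective (gmul g a).
Proof. by move=> x y e; rewrite -(gmul1 g x) -(gmul1 g y) -(gmulV g a) -!gmulA e. Qed.

Lemma gmul_right_inv x : x * x^-1 = 1.
Proof.
have idem : (x * x^-1) * (x * x^-1) = x * x^-1.
  by rewrite -(gmulA g x) (gmulA g x^-1 x) gmulV gmul1.
by move: (congr1 (gmul g (x * x^-1)^-1) idem); rewrite gmulA !gmulV gmul1.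
Qed.

Lemma gmul_right_id x : x * 1 = x.
Proof. by rewrite -(gmulV g x) gmulA gmul_right_inv gmul1. Qed.

Lemma hom_one f : is_hom g f -> f 1 = 1.
Proof.
case=> _ fM; apply: (@gmulI (f 1)).
by rewrite -fM gmul1 gmul_right_id.
Qed.

Lemma hom_inv f x : is_hom g f -> f x^-1 = (f x)^-1.
Proof.
move=> fH; have inv_l : f x^-1 * f x = 1 by rewrite -fH.2 gmulV hom_one.
by rewrite -(gmul_right_id (f x^-1)) -(gmul_right_inv (f x)) gmulA inv_l gmul1.
Qed.

Lemma same_coset_hom (pi pi_inv : G -> G) (K : set G) x y :
  is_hom g pi -> cancel pi pi_inv ->
  same_coset g K x y <-> same_coset g (pi_inv @^-1` K) (pi x) (pi y).
Proof. by move=> piH piK; rewrite /same_coset /preimage /= -hom_inv // -piH.2 piK. Qed.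

End GroupLemmas.

Section ObservabilityTransport.
Variables (R : realType) (G : topologicalType) (g : topgroup G).
Variables (phi psi : R -> G -> G) (pi pi_inv : G -> G) (K S : set G).
Hypotheses (piK : cancel pi pi_inv) (pi_invK : cancel pi_inv pi).
Hypothesis pi_phi : forall t x, pi (phi t x) = psi t (pi x).
Hypothesis same_coset_pi :
  forall x y, same_coset g K x y <-> same_coset g S (pi x) (pi y).

Lemma same_coset_flow_conj t x y :
  same_coset g K (phi t x) (phi t y) <-> same_coset g S (psi t (pi x)) (psi t (pi y)).
Proof. by rewrite -!pi_phi; exact: same_coset_pi. Qed.

Lemma observable_at_conj x : observable_at g phi K x <-> observable_at g psi S (pi x).
Proof.
split=> obs y.
- move=> y_neq; have /obs [t [t_ge0 not_coset]] : pi_inv y <> x.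
    by move=> e; apply: y_neq; rewrite -e pi_invK.
  by exists t; split => //; rewrite -(pi_invK y) -same_coset_flow_conj.
- move=> y_neq; have /obs [t [t_ge0 not_coset]] : pi y <> pi x.
    by move/(can_inj piK).
  by exists t; split => //; rewrite same_coset_flow_conj.
Qed.

Lemma observable_conj : observable g phi K <-> observable g psi S.
Proof.
split=> obs x; first by rewrite -(pi_invK x); apply/observable_at_conj.
exact/observable_at_conj.
Qed.

End ObservabilityTransport.

Theorem proposition2p6 (R : realType) (G : topologicalType) (g : topgroup G)
  (phi psi : R -> G -> G) (pi pi_inv : G -> G) (h : G -> G) :
  linear_flow g phi -> linear_flow g psi ->
  is_aut g pi -> cancel pi pi_inv -> cancel pi_inv pi ->
  (forall t x, pi (phi t x) = psi t (pi x)) ->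
  (forall t x, phi t (pi_inv x) = pi_inv (psi t x)) ->
  is_hom g h ->
  observable g phi (ker g h) <-> observable g psi (ker g (h \o pi_inv)).
Proof.
move=> _ _ [piH _] piK pi_invK pi_phi _ _.
have same_coset_pi := fun x y => same_coset_hom g _ _ (ker g h) x y piH piK.
exact: observable_conj piK pi_invK pi_phi same_coset_pi.
Qed.
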